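(* Fix a prior density $p_z$ on $\mathbb{R}^d$, an observation $x$, and $\beta>0$. Let $\mathcal{P}$ be the set of all generative models with prior $p_z$ and an arbitrary decoder (conditional density) $p_{x|z}$. For a variational density $q=q(\cdot|x)$ and a model $p\in\mathcal{P}$ with decoder $p_{x|z}$, define the $\beta$-VAE objective $$L(q,p)=\mathbb{E}_{q(z|x)}\log p_{x|z}(x|z)-\beta\,\mathrm{KL}\big(q(z|x)\,\Vert\,p_z(z)\big).$$ Let $R$ be a class of mixing transforms of the latent space that leave the prior invariant, i.e. $r\#p_z=p_z$ for all $r\in R$, with $r\in R\Rightarrow r^{-1}\in R$. For $p\in\mathcal{P}$ and $r\in R$, let $p_r\in\mathcal{P}$ be the model obtained by transforming the latents of $p$ by $r$, i.e. the model with prior $p_z$ and decoder $z\mapsto p_{x|z}(x|r(z))$. Let $\mathcal{Q}$ be a variational family and suppose $(q^*,p^* )$ satisfies $L(q^*,p^* )=\max_{q\in\mathcal{Q},\,p\in\mathcal{P}}L(q,p)$. Let $\widetilde{\mathcal{Q}}=\{r\#q:\ q\in\mathcal{Q},\ r\in R\}\cup\mathcal{Q}$. Suppose that $\mathcal{Q}$ is such that $q\in\mathcal{Q}\Rightarrow r\#q\notin\mathcal{Q}$ for all $r\in R$, and that $\arg\max_{q\in\widetilde{\mathcal{Q}}}L(q,p^* )$ is unique. Then for $r\in R$, $\max_{q\in\mathcal{Q}}L(q,p^*_r)<L(q^*,p^* )$.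
   Context: For a measurable map $f$ and a distribution $q$, $f\#q$ denotes the pushforward distribution of $q$ under $f$ (the distribution of $f(z)$ for $z\sim q$). ''Mixing transforms'' are invertible maps of the latent space that mix the latent coordinates (their Jacobian has nonzero off-diagonal entries) and have Jacobian determinant of absolute value 1. *)

From HB Require Import structures.
From mathcomp Require Import all_boot all_order all_algebra.
From mathcomp Require Import all_classical all_reals all_analysis.
Set Implicit Arguments. Unset Strict Implicit. Unset Printing Implicit Defensive.
Import Order.TTheory GRing.Theory Num.Theory.
Import numFieldNormedType.Exports.
Local Open Scope classical_set_scope.
Local Open Scope ring_scope.

(* R^n is represented by row vectors 'rV[R]_n (so that the library's   *)
(* Jacobian 'J applies).  We equip it with the sigma-algebra generated *)
(* by the coordinate maps (= the Borel sigma-algebra of R^n).          *)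
Definition measure_rV_display : measure_display -> measure_display.
Proof. exact. Qed.

Section rV_measurable.
Context (R : realType) (n : nat).
Let coors : 'I_n -> 'rV[R]_n -> R := fun i v => v ord0 i.
Let rV_set0 : g_sigma_preimage coors set0.
Proof. exact: sigma_algebra0. Qed.
Let rV_setC A : g_sigma_preimage coors A -> g_sigma_preimage coors (~` A).
Proof. exact: sigma_algebraC. Qed.
Let rV_bigcup (F : _^nat) : (forall i, g_sigma_preimage coors (F i)) ->
  g_sigma_preimage coors (\bigcup_i (F i)).
Proof. exact: sigma_algebra_bigcup. Qed.
HB.instance Definition _ :=
  @isMeasurable.Build (measure_rV_display default_measure_display)
  'rV[R]_n (g_sigma_preimage coors) rV_set0 rV_setC rV_bigcup.
End rV_measurable.

Section vae_defs.
Context (R : realType).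
Local Open Scope ereal_scope.

Definition box_rV n (a b : 'rV[R]_n) : set 'rV[R]_n :=
  [set v | forall i, (a ord0 i <= v ord0 i <= b ord0 i)%R].

(* lam is the Lebesgue measure on R^n: it gives every box its volume
   (this characterizes Lebesgue measure uniquely on the Borel sets). *)
Definition is_lebesgue_rV n (lam : {measure set 'rV[R]_n -> \bar R}) : Prop :=
  forall a b : 'rV[R]_n, (forall i, (a ord0 i <= b ord0 i)%R) ->
    lam (box_rV a b) = (\prod_(i < n) (b ord0 i - a ord0 i))%:E.

Definition is_density n (lam : {measure set 'rV[R]_n -> \bar R})
    (f : 'rV[R]_n -> R) : Prop :=
  [/\ forall z, (0 <= f z)%R, measurable_fun [set: 'rV[R]_n] f
    & \int[lam]_z (f z)%:E = 1].

(* decoder = conditional density p_{x|z}(x'|z) = dec z x' on the data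
   space R^m (w.r.t. the Lebesgue measure lamx) *)
Definition is_decoder d m (lamx : {measure set 'rV[R]_m -> \bar R})
    (dec : 'rV[R]_d -> 'rV[R]_m -> R) : Prop :=
  [/\ forall z x, (0 <= dec z x)%R,
      measurable_fun [set: 'rV[R]_d * 'rV[R]_m] (fun zx => dec zx.1 zx.2)
    & forall z, \int[lamx]_x (dec z x)%:E = 1].

Definition elog (y : R) : \bar R := if (0 < y)%R then (ln y)%:E else -oo.

Definition klterm (a b : R) : \bar R :=
  if (a <= 0)%R then 0 else if (b <= 0)%R then +oo else (a * ln (a / b))%:E.

Definition KL d (lam : {measure set 'rV[R]_d -> \bar R}) (q p : 'rV[R]_d -> R)
  : \bar R := \int[lam]_z klterm (q z) (p z).

Definition ELL d m (lam : {measure set 'rV[R]_d -> \bar R}) (q : 'rV[R]_d -> R)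
    (dec : 'rV[R]_d -> 'rV[R]_m -> R) (x : 'rV[R]_m) : \bar R :=
  \int[lam]_z ((q z)%:E * elog (dec z x)).

Definition betaVAE d m (lam : {measure set 'rV[R]_d -> \bar R}) (beta : R)
    (pz : 'rV[R]_d -> R) (x : 'rV[R]_m) (q : 'rV[R]_d -> R)
    (dec : 'rV[R]_d -> 'rV[R]_m -> R) : \bar R :=
  ELL lam q dec x - beta%:E * KL lam q pz.

Definition has_offdiag_jacobian d (r : 'rV[R]_d -> 'rV[R]_d) : Prop :=
  exists (z : 'rV[R]_d) (i j : 'I_d), i != j /\ (jacobian r z i j != 0)%R.

(* The last two clauses
   (measurability, preservation of Lebesgue measure) are consequences of
   the previous ones (change of variables / area formula), stated
   explicitly since multivariate change of variables is not in the library. *)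
Definition mixing_transform d (lam : {measure set 'rV[R]_d -> \bar R})
    (r : 'rV[R]_d -> 'rV[R]_d) : Prop :=
  [/\ bijective r,
      forall z, differentiable r z,
      forall z, `|\det (jacobian r z)|%R = 1%R,
      has_offdiag_jacobian r
    & measurable_fun [set: 'rV[R]_d] r /\
      (forall A, measurable A -> lam (r @^-1` A) = lam A)].

(* q' is the density of the pushforward r#q (for r with |det J| = 1):
   q' = q o r^{-1} *)
Definition is_pushdens d (r : 'rV[R]_d -> 'rV[R]_d) (q q' : 'rV[R]_d -> R)
  : Prop :=
  exists s : 'rV[R]_d -> 'rV[R]_d, [/\ cancel r s, cancel s r & q' = q \o s].

Definition prior_invariant d (lam : {measure set 'rV[R]_d -> \bar R})
    (pz : 'rV[R]_d -> R) (r : 'rV[R]_d -> 'rV[R]_d) : Prop :=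
  forall A, measurable A ->
    \int[lam]_(z in r @^-1` A) (pz z)%:E = \int[lam]_(z in A) (pz z)%:E.

Definition enlarged_family d (Rs : set ('rV[R]_d -> 'rV[R]_d))
    (Q : set ('rV[R]_d -> R)) : set ('rV[R]_d -> R) :=
  [set q' | (exists q r, [/\ Q q, Rs r & is_pushdens r q q']) \/ Q q'].

End vae_defs.

(** Reparametrizing the latents of the decoder by [r] can be absorbed into
    the variational density: since [r] preserves Lebesgue measure and its
    inverse [s] preserves the prior, [L(q, p⋆_r) = L(r#q, p⋆)] with
    [r#q = q \o s].  Every member of the enlarged family thus scores at most
    [L(q⋆, p⋆)], by maximality of [(q⋆, p⋆)] over all decoders.  As [r#q] is
    not in [Q], it differs from [q⋆], so uniqueness of the maximizer over the
    enlarged family makes the inequality strict. *)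

From HB Require Import structures.
From mathcomp Require Import all_boot all_order all_algebra.
From mathcomp Require Import all_classical all_reals all_analysis.
From mathcomp Require Import measurable_realfun.
Set Implicit Arguments. Unset Strict Implicit. Unset Printing Implicit Defensive.
Import Order.TTheory GRing.Theory Num.Theory.
Import numFieldNormedType.Exports.
Local Open Scope classical_set_scope.
Local Open Scope ring_scope.

Lemma lt_unique_argmax (T : Type) (disp : Order.disp_t) (U : porderType disp)
    (S : set T) (f : T -> U) (a b : T) :
  (exists! c, S c /\ forall y, S y -> (f y <= f c)%O) ->
  S a /\ (forall y, S y -> (f y <= f a)%O) -> S b -> b <> a -> (f b < f a)%O.
Proof.
move=> [c [_ c_uniq]] [Sa a_max] Sb ba.
rewrite lt_neqAle a_max // andbT; apply/eqP => fba.
apply: ba; rewrite -(c_uniq a) ?(c_uniq b) //; split=> // y Sy.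
by rewrite fba a_max.
Qed.

Section measure_preserving.
Context (R : realType) (dT : measure_display) (T : measurableType dT).
Context (mu : {measure set T -> \bar R}) (r : T -> T).
Hypotheses (mr : measurable_fun setT r)
  (mu_r : forall A, measurable A -> mu (r @^-1` A) = mu A).
Local Open Scope ereal_scope.

Lemma integral_comp_measure_preserving (D : set T) (f : T -> \bar R) :
  measurable D -> measurable_fun D f ->
  \int[mu]_(x in r @^-1` D) f (r x) = \int[mu]_(y in D) f y.
Proof.
move=> mD mf.
have -> : \int[mu]_(y in D) f y = \int[pushforward mu r]_(y in D) f y.
  by apply: eq_measure_integral => A mA _; exact/esym/mu_r.
rewrite [RHS]integralE [LHS]integralE -[fun x => f (r x)]/(f \o r).
rewrite funepos_comp funeneg_comp.
rewrite (ge0_integral_pushforward mr _ mD (measurable_funepos mf)) //.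
by rewrite (ge0_integral_pushforward mr _ mD (measurable_funeneg mf)).
Qed.

Lemma invariant_density_comp_ae_eq (s : T -> T) (f : T -> R) :
  cancel r s -> measurable_fun setT s ->
  mu.-integrable setT (EFin \o f) ->
  (forall A, measurable A ->
     \int[mu]_(z in s @^-1` A) (f z)%:E = \int[mu]_(z in A) (f z)%:E) ->
  ae_eq mu setT (EFin \o f) (EFin \o (f \o r)).
Proof.
move=> rK ms intf f_inv.
have mf : measurable_fun setT (EFin \o f) by case/integrableP: intf.
apply: integral_ae_eq => //; first exact: (measurableT_comp mf mr).
move=> A _ mA.
have msA : measurable (s @^-1` A) by rewrite -[_ @^-1` _]setTI; exact: ms.
have rsA : r @^-1` (s @^-1` A) = A by apply/seteqP; split=> z /=; rewrite rK.
rewrite -f_inv // -(integral_comp_measure_preserving msA) ?rsA //.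
exact: measurable_funTS.
Qed.

End measure_preserving.

Section measurable_vae_integrands.
Context (R : realType) (dT : measure_display) (T : measurableType dT).
Local Open Scope ereal_scope.

Lemma measurable_elog (f : T -> R) :
  measurable_fun setT f -> measurable_fun setT (fun z => elog (f z)).
Proof.
move=> mf; apply: measurable_fun_ifT.
- by apply: measurable_fun_ltr => //; exact: measurable_cst.
- by do 2 apply: measurableT_comp => //; exact: measurable_ln.
- exact: measurable_cst.
Qed.

Lemma klterm_lnB (a b : R) : klterm a b =
  if (a <= 0)%R then 0 else if (b <= 0)%R then +oo else (a * (ln a - ln b))%:E.
Proof.
rewrite /klterm; case: ifPn => //; rewrite -ltNge => a_gt0.
by case: ifPn => //; rewrite -ltNge => b_gt0; rewrite ln_div.
Qed.

Lemma measurable_klterm (f g : T -> R) :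
  measurable_fun setT f -> measurable_fun setT g ->
  measurable_fun setT (fun z => klterm (f z) (g z)).
Proof.
move=> mf mg; under eq_fun do rewrite klterm_lnB.
apply: measurable_fun_ifT; first exact: measurable_fun_ler.
  exact: measurable_cst.
apply: measurable_fun_ifT; first exact: measurable_fun_ler.
  exact: measurable_cst.
apply: measurableT_comp => //; apply: measurable_funM => //.
by apply: measurable_funB; apply: measurableT_comp => //; exact: measurable_ln.
Qed.

End measurable_vae_integrands.

Lemma is_decoder_measurable_at (R : realType) (d m : nat)
    (lamx : {measure set 'rV[R]_m -> \bar R}) (dec : 'rV[R]_d -> 'rV[R]_m -> R)
    (x : 'rV[R]_m) :
  is_decoder lamx dec -> measurable_fun setT (fun z => dec z x).
Proof.
case=> _ mdec _.
exact: (measurable_fun_pair1 (f := fun zx : _ * _ => dec zx.1 zx.2)).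
Qed.

Lemma is_decoder_comp (R : realType) (d' d m : nat)
    (lamx : {measure set 'rV[R]_m -> \bar R}) (dec : 'rV[R]_d -> 'rV[R]_m -> R)
    (r : 'rV[R]_d' -> 'rV[R]_d) :
  measurable_fun setT r -> is_decoder lamx dec -> is_decoder lamx (dec \o r).
Proof.
move=> mr [dec_ge0 mdec int_dec].
split=> [z x'||z]; [exact: dec_ge0 | | exact: int_dec].
have -> : (fun zx : _ * _ => (dec \o r) zx.1 zx.2) =
    (fun zx : _ * _ => dec zx.1 zx.2) \o (fun zx => (r zx.1, zx.2)) by [].
apply: measurableT_comp => //.
by apply: measurable_fun_pair => //; exact: measurableT_comp.
Qed.

Section latent_reparametrization.
Context (R : realType) (d m : nat) (lam : {measure set 'rV[R]_d -> \bar R}).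
Context (r s : 'rV[R]_d -> 'rV[R]_d).
Hypotheses (rK : cancel r s) (mr : measurable_fun setT r)
  (ms : measurable_fun setT s)
  (lam_r : forall A, measurable A -> lam (r @^-1` A) = lam A).
Local Open Scope ereal_scope.

Lemma ELL_comp_decoder (q : 'rV[R]_d -> R) (dec : 'rV[R]_d -> 'rV[R]_m -> R)
    (x : 'rV[R]_m) :
  measurable_fun setT q -> measurable_fun setT (fun z => dec z x) ->
  ELL lam q (dec \o r) x = ELL lam (q \o s) dec x.
Proof.
move=> mq mdec.
have mf : measurable_fun setT (fun w => ((q \o s) w)%:E * elog (dec w x)).
  apply: emeasurable_funM; last exact: measurable_elog.
  by apply: measurableT_comp => //; exact: measurableT_comp.
rewrite /ELL -(integral_comp_measure_preserving mr lam_r measurableT mf).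
by rewrite preimage_setT; apply: eq_integral => z _ /=; rewrite rK.
Qed.

Lemma KL_comp_ae_invariant (q pz : 'rV[R]_d -> R) :
  measurable_fun setT q -> measurable_fun setT pz ->
  ae_eq lam setT (EFin \o pz) (EFin \o (pz \o r)) ->
  KL lam q pz = KL lam (q \o s) pz.
Proof.
move=> mq mpz pzr.
have mf : measurable_fun setT (fun w => klterm ((q \o s) w) (pz w)).
  by apply: measurable_klterm => //; exact: measurableT_comp.
rewrite /KL -(integral_comp_measure_preserving mr lam_r measurableT mf).
rewrite preimage_setT; under [RHS]eq_integral do rewrite /= rK.
apply: ae_eq_integral => //.
- exact: measurable_klterm.
- by apply: measurable_klterm => //; exact: measurableT_comp.
by apply: filterS pzr => z /= pzrz Tz; case: (pzrz Tz) => ->.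
Qed.

Lemma betaVAE_comp_decoder (beta : R) (pz : 'rV[R]_d -> R) (x : 'rV[R]_m)
    (q : 'rV[R]_d -> R) (dec : 'rV[R]_d -> 'rV[R]_m -> R) :
  is_density lam pz -> prior_invariant lam pz s ->
  measurable_fun setT q -> measurable_fun setT (fun z => dec z x) ->
  betaVAE lam beta pz x q (dec \o r) = betaVAE lam beta pz x (q \o s) dec.
Proof.
move=> [pz_ge0 mpz int_pz] pz_s mq mdec; rewrite /betaVAE.
rewrite ELL_comp_decoder // (@KL_comp_ae_invariant q pz) //.
apply: invariant_density_comp_ae_eq rK ms _ pz_s => //.
apply/integrableP; split; first exact: measurableT_comp.
under eq_integral do rewrite /= ger0_norm //.
by rewrite int_pz ltry.
Qed.

End latent_reparametrization.

Theorem theorem1 (R : realType) (d m : nat)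
  (lam : {measure set 'rV[R]_d -> \bar R})
  (lamx : {measure set 'rV[R]_m -> \bar R})
  (Hlam : is_lebesgue_rV lam) (Hlamx : is_lebesgue_rV lamx)
  (pz : 'rV[R]_d -> R) (Hpz : is_density lam pz)
  (x : 'rV[R]_m) (beta : R) (Hbeta : 0 < beta)
  (Rs : set ('rV[R]_d -> 'rV[R]_d))
  (HRmix : forall r, Rs r -> mixing_transform lam r)
  (HRprior : forall r, Rs r -> prior_invariant lam pz r)
  (HRinv : forall r s, Rs r -> cancel r s -> cancel s r -> Rs s)
  (Q : set ('rV[R]_d -> R)) (HQ : forall q, Q q -> is_density lam q)
  (qstar : 'rV[R]_d -> R) (decstar : 'rV[R]_d -> 'rV[R]_m -> R)
  (Hqstar : Q qstar) (Hdecstar : is_decoder lamx decstar)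
  (Hmax : forall q dec, Q q -> is_decoder lamx dec ->
     (betaVAE lam beta pz x q dec <= betaVAE lam beta pz x qstar decstar)%E)
  (Hdisj : forall q r q', Q q -> Rs r -> is_pushdens r q q' -> ~ Q q')
  (Huniq : exists! q, enlarged_family Rs Q q /\
     (forall q', enlarged_family Rs Q q' ->
        (betaVAE lam beta pz x q' decstar <= betaVAE lam beta pz x q decstar)%E)) :
  forall r, Rs r -> forall q, Q q ->
    (betaVAE lam beta pz x q (decstar \o r) < betaVAE lam beta pz x qstar decstar)%E.
Proof.
have reparam r s q : Rs r -> cancel r s -> cancel s r -> Q q ->
    betaVAE lam beta pz x q (decstar \o r) =
    betaVAE lam beta pz x (q \o s) decstar.
  move=> Rr rK sK Qq; have Rs_s := HRinv r s Rr rK sK.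
  have [_ _ _ _ [mr lam_r]] := HRmix r Rr.
  have [_ _ _ _ [ms _]] := HRmix s Rs_s.
  have [_ mq _] := HQ q Qq.
  apply: betaVAE_comp_decoder => //; first exact: HRprior.
  exact: is_decoder_measurable_at Hdecstar.
have le_star q' : enlarged_family Rs Q q' ->
    (betaVAE lam beta pz x q' decstar <= betaVAE lam beta pz x qstar decstar)%E.
  case=> [[q1 [r1 [Qq1 Rr1 [s1 [r1K s1K ->]]]]]|Qq']; last exact: Hmax.
  rewrite -(reparam r1) //; apply: Hmax => //.
  by apply: is_decoder_comp Hdecstar; have [_ _ _ _ []] := HRmix r1 Rr1.
move=> r Rr q Qq; have [[s rK sK] _ _ _ _] := HRmix r Rr.
have push_q : is_pushdens r q (q \o s) by exists s.
rewrite (reparam r s) //; apply: (lt_unique_argmax Huniq).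
- by split=> //; right.
- by left; exists q, r.
- by move=> qs_star; apply: (Hdisj q r (q \o s)) => //; rewrite qs_star.
Qed.
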